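(* Let $E,F,L,K:\mathcal I\to\mathbb R^{m\times m}$ be sufficiently smooth, $L,K$ pointwise nonsingular, and $\tilde E=LEK$, $\tilde F=LFK+LEK'$. Let $\tilde{\mathcal E}_{[k]},\tilde{\mathcal F}_{[k]},\tilde S_{[k]}$ be the objects associated with $\{\tilde E,\tilde F\}$. Then for every $k\ge0$ there exist pointwise nonsingular block lower triangular matrix functions $\mathcal L_{[k]},\mathcal K_{[k]}:\mathcal I\to\mathbb R^{(k+1)m\times(k+1)m}$, uniquely determined by $L,K$ and their derivatives, with all diagonal blocks equal to $L$ resp. $K$, such that $\tilde{\mathcal E}_{[k]}=\mathcal L_{[k]}\mathcal E_{[k]}\mathcal K_{[k]}$, $\tilde{\mathcal F}_{[k]}=\mathcal L_{[k]}\mathcal F_{[k]}K+\mathcal L_{[k]}\mathcal E_{[k]}\mathcal H_{[k]}$ with $\mathcal H_{[k]}=[K';K'';\dots;K^{(k+1)}]$, and moreover $\tilde S_{[k]}(t)=K(t)^{-1}S_{[k]}(t)$ and $\tilde S_{[k]}(t)\cap\ker\tilde E(t)=K(t)^{-1}(S_{[k]}(t)\cap\ker E(t))$ for all $t$. In particular $\operatorname{rank}\mathcal E_{[k]}$, $\dim S_{[k]}$ and $\dim(S_{[k]}\cap\ker E)$ are invariant under this transformation.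
   Context: Derivative arrays: for $k\ge0$, $\mathcal E_{[k]}:\mathcal I\to\mathbb R^{(k+1)m\times(k+1)m}$ is the block lower triangular matrix function whose $(i,j)$ block ($0\le j\le i\le k$) is $\binom{i}{j}E^{(i-j)}+\binom{i}{j+1}F^{(i-j-1)}$ (the $F$-term being absent for $j=i$), zero for $j>i$; $\mathcal F_{[k]}=[F;F';\dots;F^{(k)}]$. $S_{[k]}(t)=\{z\in\mathbb R^m:\mathcal F_{[k]}(t)z\in\operatorname{im}\mathcal E_{[k]}(t)\}$. *)

From HB Require Import structures.
From mathcomp Require Import all_boot all_order all_algebra.
From mathcomp Require Import all_classical all_reals all_analysis.
Set Implicit Arguments. Unset Strict Implicit. Unset Printing Implicit Defensive.
Import Order.TTheory GRing.Theory Num.Theory numFieldNormedType.Exports.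
Local Open Scope ring_scope.
Local Open Scope classical_set_scope.

Section DerivArrays.
Variable R : realType.

Definition mder (m n : nat) (A : R -> 'M[R]_m) (t : R) : 'M[R]_m :=
  \matrix_(i, j) derive1n n (fun s => A s i j) t.

(* entries infinitely differentiable on I ("sufficiently smooth") *)
Definition smooth_on (m : nat) (I : set R) (A : R -> 'M[R]_m) : Prop :=
  forall (n : nat) (i j : 'I_m) (t : R), I t ->
    derivable (derive1n n (fun s => A s i j)) t 1.

(* block indexing of 'I_((k+1) m): index p lies in block row p %/ m,
   at position p %% m inside the block *)
Lemma blk_mod_lt (k m : nat) (p : 'I_(k.+1 * m)) : (p %% m < m)%N.
Proof.
rewrite ltn_mod; case: m p => [|m] [p hp] //=.
by rewrite muln0 in hp.
Qed.

Definition blk (k m : nat) (p : 'I_(k.+1 * m)) : nat := (p %/ m)%N.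
Definition bidx (k m : nat) (p : 'I_(k.+1 * m)) : 'I_m := Ordinal (blk_mod_lt p).

(* derivative array E_[k] : block (i,j) = C(i,j) E^(i-j) + C(i,j+1) F^(i-j-1)
   for j <= i (the F-term vanishes for j = i since C(i,i+1) = 0), 0 for j > i *)
Definition Earr (m : nat) (E F : R -> 'M[R]_m) (k : nat) (t : R)
  : 'M[R]_(k.+1 * m) :=
  \matrix_(p, q)
    if (blk q <= blk p)%N then
      'C(blk p, blk q)%:R * mder (blk p - blk q) E t (bidx p) (bidx q)
      + 'C(blk p, (blk q).+1)%:R * mder (blk p - blk q - 1) F t (bidx p) (bidx q)
    else 0.

Definition Farr (m : nat) (F : R -> 'M[R]_m) (k : nat) (t : R)
  : 'M[R]_(k.+1 * m, m) :=
  \matrix_(p, b) mder (blk p) F t (bidx p) b.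

Definition Harr (m : nat) (K : R -> 'M[R]_m) (k : nat) (t : R)
  : 'M[R]_(k.+1 * m, m) :=
  \matrix_(p, b) mder (blk p).+1 K t (bidx p) b.

Definition Sset (m : nat) (E F : R -> 'M[R]_m) (k : nat) (t : R) : set 'cV[R]_m :=
  [set z | exists y : 'cV[R]_(k.+1 * m), Earr E F k t *m y = Farr F k t *m z].

Definition kerset (m : nat) (A : 'M[R]_m) : set 'cV[R]_m := [set z | A *m z = 0].

Definition invimg (m : nat) (M : 'M[R]_m) (S : set 'cV[R]_m) : set 'cV[R]_m :=
  (fun z => invmx M *m z) @` S.

Definition is_dim (m : nat) (S : set 'cV[R]_m) (d : nat) : Prop :=
  exists B : 'M[R]_(m, d), \rank B = d /\
    (forall z, S z <-> exists c : 'cV[R]_d, z = B *m c).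

Definition blk_lower_diag (m k : nat) (M : 'M[R]_(k.+1 * m)) (D : 'M[R]_m) : Prop :=
  forall p q : 'I_(k.+1 * m),
    ((blk p < blk q)%N -> M p q = 0) /\
    (blk p = blk q -> M p q = D (bidx p) (bidx q)).

End DerivArrays.

From HB Require Import structures.
From mathcomp Require Import all_boot all_order all_algebra.
From mathcomp Require Import all_classical all_reals all_analysis.
From mathcomp Require Import zify ring.
Import Order.TTheory GRing.Theory Num.Theory numFieldNormedType.Exports.
Local Open Scope ring_scope.
Local Open Scope classical_set_scope.

Set Implicit Arguments. Unset Strict Implicit. Unset Printing Implicit Defensive.

(* Write [A] for the block matrix with (i, j) block C(i, j) A^(i-j) (zero above the
   diagonal). The Leibniz rule says exactly that [AB] = [A][B], and the derivative
   array E_[k] has (i, j) block [E]_(i,j) + [F]_(i,j+1). Applied to E~ = L (E K) and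
   F~ = L (F K + E K'), Pascal's rule [K]_(i+1,j+1) = [K]_(i,j) + [K']_(i,j+1) turns
   this into E~_[k] = [L] E_[k] K_[k] with (K_[k])_(i,j) = [K]_(i+1,j+1), and
   similarly for F~_[k]. Both factors are block lower triangular with invertible
   diagonal blocks L and K, hence invertible, and a solution y of E_[k] y = F_[k] (K z)
   corresponds to the solution K_[k]^-1 (y + H_[k] z) of the transformed system. *)

Lemma pascal_sum (V : zmodType) (h : nat -> nat -> V) n :
  \sum_(c < n.+1) (h (n - c)%N.+1 c + h (n - c)%N c.+1) *+ 'C(n, c)
  = \sum_(c < n.+2) h (n.+1 - c)%N c *+ 'C(n.+1, c).
Proof.
rewrite [RHS]big_ord_recl /= subn0 bin0.
under [in RHS]eq_bigr => i _ do rewrite /bump /= subSS binS mulrnDr.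
rewrite big_split /= [X in _ = _ + (X + _)]big_ord_recr /= bin_small // mulr0n addr0.
under [in LHS]eq_bigr => i _ do rewrite mulrnDl.
rewrite big_split /= big_ord_recl /= subn0 bin0 -addrA; congr (_ + _).
by congr (_ + _); apply: eq_bigr => i _; rewrite /bump /= subnSK.
Qed.

Lemma bin_trinomial n l a : (a <= l)%N -> (l <= n)%N ->
  ('C(n, l) * 'C(l, a) = 'C(n, a) * 'C(n - a, l - a))%N.
Proof.
move=> al ln; have an := leq_trans al ln.
have fact_pos : (0 < a`! * (l - a)`! * (n - l)`!)%N by rewrite !muln_gt0 !fact_gt0.
apply/eqP; rewrite -(eqn_pmul2r fact_pos); apply/eqP.
have -> : ('C(n, l) * 'C(l, a) * (a`! * (l - a)`! * (n - l)`!)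
   = 'C(n, l) * ('C(l, a) * (a`! * (l - a)`!)) * (n - l)`!)%N by ring.
have -> : ('C(n, a) * 'C(n - a, l - a) * (a`! * (l - a)`! * (n - l)`!)
   = 'C(n, a) * (a`! * ('C(n - a, l - a) * ((l - a)`! * (n - l)`!))))%N by ring.
have sub : (l - a <= n - a)%N by lia.
have := bin_fact sub; rewrite (_ : n - a - (l - a) = n - l)%N; last by lia.
by move=> ->; rewrite (bin_fact al) -mulnA (bin_fact ln) (bin_fact an).
Qed.

Lemma mulmxMnr (R : pzRingType) p q r (X : 'M[R]_(p, q)) (Y : 'M[R]_(q, r)) n :
  X *m (Y *+ n) = (X *m Y) *+ n.
Proof. exact: raddfMn. Qed.

Lemma mulmxMnl (R : pzRingType) p q r (X : 'M[R]_(p, q)) (Y : 'M[R]_(q, r)) n :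
  (X *+ n) *m Y = (X *m Y) *+ n.
Proof. exact: (raddfMn (mulmxr Y)). Qed.

Lemma sum_interval_support (V : zmodType) N i j (f : nat -> V) :
  (j <= i < N)%N -> (forall l, (l < j)%N || (i < l)%N -> f l = 0) ->
  \sum_(l < N) f l = \sum_(c < (i - j).+1) f (j + c)%N.
Proof.
move=> /andP[ji iN] f0.
rewrite -(big_mkord xpredT f) (@big_cat_nat _ _ _ j) //=; last by lia.
rewrite (@big_cat_nat _ _ _ i.+1 j) //=; last by lia.
rewrite big1_seq => [|l /andP[_]]; last first.
  by rewrite mem_index_iota => /andP[_ lj]; apply: f0; rewrite lj.
rewrite [X in _ + (_ + X)]big1_seq => [|l /andP[_]]; last first.
  by rewrite mem_index_iota => /andP[il _]; apply: f0; rewrite il orbT.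
rewrite add0r addr0 -{1}(add0n j) big_addn subSn // big_mkord.
by apply: eq_bigr => c _; rewrite addnC.
Qed.

Section SmoothFunctions.
Variables (R : realType) (I : set R).
Hypothesis openI : open I.
Implicit Types f g : R -> R.

Definition smooth_fun f := forall n t, I t -> derivable (derive1n n f) t 1.

(* Openness of I is what lets agreement on I pass to the derivatives. *)
Lemma derive1n_on_rec f (D : nat -> R -> R) :
  (forall t, I t -> f t = D 0%N t) ->
  (forall n t, I t -> derivable (D n) t 1 /\ derive1 (D n) t = D n.+1 t) ->
  (forall n t, I t -> derive1n n f t = D n t) /\ smooth_fun f.
Proof.
move=> f0 dD.
have near_eq g h t : (forall u, I u -> g u = h u) -> I t -> \forall u \near t, g u = h u.
  by move=> gh It; apply: filterS (openI It) => u /gh.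
have fD : forall n t, I t -> derive1n n f t = D n t.
  elim=> [|n IH] t It; first exact: f0.
  rewrite derive1nS derive1E (near_eq_derive _ (near_eq _ _ _ IH It)) -derive1E.
  exact: (dD n t It).2.
split=> // n t It.
exact: near_eq_derivable (near_eq _ _ _ (fun u Iu => esym (fD n u Iu)) It) (dD n t It).1.
Qed.

Lemma derive1_sum p (h : 'I_p -> R -> R) t : (forall l, derivable (h l) t 1) ->
  derivable (fun u => \sum_(l < p) h l u) t 1 /\
  derive1 (fun u => \sum_(l < p) h l u) t = \sum_(l < p) derive1 (h l) t.
Proof.
move=> dh; rewrite (_ : (fun u => _) = \sum_(l < p) h l); last first.
  by apply/funext => u; rewrite fct_sumE.
split; first exact: derivable_sum.
by rewrite derive1E derive_sum //; apply: eq_bigr => l _; rewrite derive1E.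
Qed.

Lemma derive1Mn f k t : derivable f t 1 ->
  derivable (fun u => f u *+ k) t 1 /\ derive1 (fun u => f u *+ k) t = derive1 f t *+ k.
Proof.
move=> df; rewrite (_ : (fun u => _) = fun u => k%:R * f u); last first.
  by apply/funext => u; rewrite mulr_natl.
split; first exact: derivableM (derivable_cst _ _ _) df.
by rewrite derive1Ml // mulr_natl.
Qed.

Lemma derive1nD_on f g : smooth_fun f -> smooth_fun g ->
  (forall n t, I t -> derive1n n (fun u => f u + g u) t = derive1n n f t + derive1n n g t) /\
  smooth_fun (fun u => f u + g u).
Proof.
move=> sf sg; apply: derive1n_on_rec => // n t It.
split; first exact: derivableD (sf n t It) (sg n t It).
by rewrite !derive1nS !derive1E deriveD //; [exact: sf | exact: sg].
Qed.

Lemma derive1n_sum_on p (F : 'I_p -> R -> R) : (forall l, smooth_fun (F l)) ->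
  (forall n t, I t -> derive1n n (fun u => \sum_(l < p) F l u) t
                      = \sum_(l < p) derive1n n (F l) t) /\
  smooth_fun (fun u => \sum_(l < p) F l u).
Proof.
move=> sF; apply: derive1n_on_rec => // n t It.
exact: derive1_sum (fun l => sF l n t It).
Qed.

Lemma derive1nM_on f g : smooth_fun f -> smooth_fun g ->
  (forall n t, I t -> derive1n n (fun u => f u * g u) t =
     \sum_(c < n.+1) (derive1n (n - c) f t * derive1n c g t) *+ 'C(n, c)) /\
  smooth_fun (fun u => f u * g u).
Proof.
move=> sf sg.
apply: derive1n_on_rec => [t _|n t It]; first by rewrite big_ord1 subn0 bin0.
have dterm (c : 'I_n.+1) :
    derivable (fun u => derive1n (n - c) f u * derive1n c g u) t 1 /\
    derive1 (fun u => derive1n (n - c) f u * derive1n c g u) t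
    = derive1n (n - c).+1 f t * derive1n c g t + derive1n (n - c) f t * derive1n c.+1 g t.
  have [df dg] := (sf (n - c)%N t It, sg c t It).
  split; first exact: derivableM df dg.
  rewrite derive1E deriveM // -!derive1E /GRing.scale /= addrC.
  by rewrite [derive1n c g t * _]mulrC.
have [dsum ->] := derive1_sum (fun c => (derive1Mn 'C(n, c) (dterm c).1).1).
split=> //; under eq_bigr => c _ do rewrite (derive1Mn _ (dterm c).1).2 (dterm c).2.
exact: (pascal_sum (fun a b => derive1n a f t * derive1n b g t)).
Qed.

End SmoothFunctions.

Section SmoothMatrices.
Variables (R : realType) (m : nat) (I : set R).
Hypothesis openI : open I.
Implicit Types A B : R -> 'M[R]_m.

Lemma smooth_onP A : smooth_on I A <-> forall i j, smooth_fun I (fun s => A s i j).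
Proof. by split=> sA; [move=> i j n t | move=> n i j t]; apply: sA. Qed.

Lemma mder0 A t : mder 0 A t = A t.
Proof. by apply/matrixP => a b; rewrite mxE. Qed.

Lemma mder_derive1 A n t : mder n (mder 1 A) t = mder n.+1 A t.
Proof.
apply/matrixP => a b; rewrite !mxE derive1Sn.
by congr (derive1n n _ t); apply/funext => s; rewrite mxE.
Qed.

Lemma smooth_on_derive1 A : smooth_on I A -> smooth_on I (mder 1 A).
Proof.
move=> sA n a b t It.
rewrite (_ : (fun s => _) = derive1 (fun s => A s a b)); last first.
  by apply/funext => s; rewrite mxE.
by rewrite -derive1Sn; apply: sA.
Qed.

Lemma mderD A B n t : smooth_on I A -> smooth_on I B -> I t ->
  mder n (fun s => A s + B s) t = mder n A t + mder n B t.
Proof.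
move=> /smooth_onP sA /smooth_onP sB It; apply/matrixP => a b; rewrite !mxE.
rewrite (_ : (fun s => _) = fun s => A s a b + B s a b); last first.
  by apply/funext => s; rewrite mxE.
by rewrite (derive1nD_on openI (sA a b) (sB a b)).1.
Qed.

Lemma smooth_onD A B : smooth_on I A -> smooth_on I B ->
  smooth_on I (fun s => A s + B s).
Proof.
move=> /smooth_onP sA /smooth_onP sB; apply/smooth_onP => a b.
rewrite (_ : (fun s => _) = fun s => A s a b + B s a b); last first.
  by apply/funext => s; rewrite mxE.
exact: (derive1nD_on openI (sA a b) (sB a b)).2.
Qed.

Let entryM A B a b :
  (fun s => (A s *m B s) a b) = fun s => \sum_(l < m) A s a l * B s l b.
Proof. by apply/funext => s; rewrite mxE. Qed.

Lemma smooth_onM A B : smooth_on I A -> smooth_on I B ->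
  smooth_on I (fun s => A s *m B s).
Proof.
move=> /smooth_onP sA /smooth_onP sB; apply/smooth_onP => a b; rewrite entryM.
apply: (derive1n_sum_on openI _).2 => l.
exact: (derive1nM_on openI (sA a l) (sB l b)).2.
Qed.

Lemma mderM A B n t : smooth_on I A -> smooth_on I B -> I t ->
  mder n (fun s => A s *m B s) t
  = \sum_(c < n.+1) (mder (n - c) A t *m mder c B t) *+ 'C(n, c).
Proof.
move=> /smooth_onP sA /smooth_onP sB It; apply/matrixP => a b.
rewrite mxE summxE entryM (derive1n_sum_on openI _).1 //; last first.
  by move=> l; exact: (derive1nM_on openI (sA a l) (sB l b)).2.
under eq_bigr => l _ do rewrite (derive1nM_on openI (sA a l) (sB l b)).1 //.
rewrite exchange_big /=; apply: eq_bigr => c _.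
rewrite mulmxnE mxE sumrMnl; congr (_ *+ _).
by apply: eq_bigr => l _; rewrite !mxE.
Qed.

End SmoothMatrices.

Section BlockMatrices.
Variables (R : pzRingType) (m k : nat).

Lemma blk_lt (p : 'I_(k.+1 * m)) : (blk p < k.+1)%N.
Proof. by rewrite /blk; case: m p => [|m'] [p hp] /=; rewrite ?muln0 // ltn_divLR. Qed.

Lemma bindex_lt (l : 'I_k.+1) (b : 'I_m) : (l * m + b < k.+1 * m)%N.
Proof.
have : (l.+1 * m <= k.+1 * m)%N by rewrite leq_mul2r ltn_ord orbT.
by rewrite mulSn; have := ltn_ord b; lia.
Qed.

Definition bindex (l : 'I_k.+1) (b : 'I_m) : 'I_(k.+1 * m) := Ordinal (bindex_lt l b).

Lemma blk_bindex l b : blk (bindex l b) = l.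
Proof. by rewrite /blk /= divnMDl ?divn_small ?addn0 //; have := ltn_ord b; lia. Qed.

Lemma bidx_bindex l b : bidx (bindex l b) = b.
Proof. by apply: val_inj; rewrite /= modnMDl modn_small. Qed.

Lemma bindexK (p : 'I_(k.+1 * m)) : bindex (Ordinal (blk_lt p)) (bidx p) = p.
Proof. by apply: val_inj; rewrite /= /blk -divn_eq. Qed.

Lemma sum_blocks (V : zmodType) (F : 'I_(k.+1 * m) -> V) :
  \sum_p F p = \sum_(l < k.+1) \sum_(b < m) F (bindex l b).
Proof.
rewrite pair_big /=; apply: (reindex (fun lb : 'I_k.+1 * 'I_m => bindex lb.1 lb.2)).
apply: onW_bij; exists (fun p => (Ordinal (blk_lt p), bidx p)); last exact: bindexK.
by move=> [l b]; congr (_, _); [apply: val_inj; rewrite /= blk_bindex | rewrite bidx_bindex].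
Qed.

Definition blkmx (M : nat -> nat -> 'M[R]_m) : 'M[R]_(k.+1 * m) :=
  \matrix_(p, q) M (blk p) (blk q) (bidx p) (bidx q).

Definition blkcol (V : nat -> 'M[R]_m) : 'M[R]_(k.+1 * m, m) :=
  \matrix_(p, b) V (blk p) (bidx p) b.

Lemma mul_blkmx M1 M2 :
  blkmx M1 *m blkmx M2 = blkmx (fun i j => \sum_(l < k.+1) M1 i l *m M2 l j).
Proof.
apply/matrixP => p q; rewrite !mxE sum_blocks summxE; apply: eq_bigr => l _.
by rewrite mxE; apply: eq_bigr => b _; rewrite !mxE blk_bindex bidx_bindex.
Qed.

Lemma mul_blkmx_col M V :
  blkmx M *m blkcol V = blkcol (fun i => \sum_(l < k.+1) M i l *m V l).
Proof.
apply/matrixP => p q; rewrite !mxE sum_blocks summxE; apply: eq_bigr => l _.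
by rewrite mxE; apply: eq_bigr => b _; rewrite !mxE blk_bindex bidx_bindex.
Qed.

Lemma mul_blkcol_mx V X : blkcol V *m X = blkcol (fun i => V i *m X).
Proof. by apply/matrixP => p q; rewrite !mxE; apply: eq_bigr => b _; rewrite !mxE. Qed.

Lemma add_blkcol V1 V2 : blkcol V1 + blkcol V2 = blkcol (fun i => V1 i + V2 i).
Proof. by apply/matrixP => p q; rewrite !mxE. Qed.

Lemma eq_blkmx M1 M2 : (forall i j, (i < k.+1)%N -> (j < k.+1)%N -> M1 i j = M2 i j) ->
  blkmx M1 = blkmx M2.
Proof. by move=> eqM; apply/matrixP => p q; rewrite !mxE eqM // blk_lt. Qed.

Lemma eq_blkcol V1 V2 : (forall i, (i < k.+1)%N -> V1 i = V2 i) -> blkcol V1 = blkcol V2.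
Proof. by move=> eqV; apply/matrixP => p q; rewrite !mxE eqV // blk_lt. Qed.

End BlockMatrices.

Section DerivativeBlocks.
Variables (R : realType) (m : nat) (I : set R).
Hypothesis openI : open I.
Implicit Types A B : R -> 'M[R]_m.

Definition deriv_blk A t i j : 'M[R]_m :=
  if (j <= i)%N then mder (i - j) A t *+ 'C(i, j) else 0.

Lemma deriv_blk_gt A t i j : (i < j)%N -> deriv_blk A t i j = 0.
Proof. by rewrite /deriv_blk ltnNge => /negbTE ->. Qed.

Lemma deriv_blk_diag A t i : deriv_blk A t i i = A t.
Proof. by rewrite /deriv_blk leqnn subnn binn mulr1n mder0. Qed.

Lemma deriv_blk0S A t i : deriv_blk A t i.+1 0 = deriv_blk (mder 1 A) t i 0.
Proof. by rewrite /deriv_blk !leq0n !subn0 !bin0 mder_derive1. Qed.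

Lemma deriv_blkSS A t i j :
  deriv_blk A t i.+1 j.+1 = deriv_blk A t i j + deriv_blk (mder 1 A) t i j.+1.
Proof.
rewrite /deriv_blk ltnS; case: (ltngtP j i) => [ji|ij|<-].
- by rewrite subSS binS mulrnDr addrC mder_derive1 subnSK.
- by rewrite addr0.
- by rewrite !subnn !binn addr0.
Qed.

Lemma deriv_blkD A B t i j : smooth_on I A -> smooth_on I B -> I t ->
  deriv_blk (fun s => A s + B s) t i j = deriv_blk A t i j + deriv_blk B t i j.
Proof.
move=> sA sB It; rewrite /deriv_blk; case: ifP => _; last by rewrite addr0.
by rewrite (mderD openI _ sA sB It) mulrnDl.
Qed.

Lemma deriv_blkM A B t N i j : smooth_on I A -> smooth_on I B -> I t -> (i < N)%N ->
  deriv_blk (fun s => A s *m B s) t i j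
  = \sum_(l < N) deriv_blk A t i l *m deriv_blk B t l j.
Proof.
move=> sA sB It iN; case: (leqP j i) => ji; last first.
  rewrite deriv_blk_gt // big1 // => l _; case: (leqP l i) => li.
    by rewrite (deriv_blk_gt B) ?mulmx0 //; apply: leq_trans ji.
  by rewrite deriv_blk_gt // mul0mx.
rewrite (@sum_interval_support _ N i j (fun l => deriv_blk A t i l *m deriv_blk B t l j))
  ?ji //; last first.
  move=> l /orP[lj|il]; first by rewrite (deriv_blk_gt B) // mulmx0.
  by rewrite deriv_blk_gt // mul0mx.
rewrite /deriv_blk ji (mderM openI _ sA sB It) -sumrMnl; apply: eq_bigr => c _.
have jci : (j + c <= i)%N by have := ltn_ord c; lia.
rewrite leq_addr jci mulmxMnl mulmxMnr -!mulrnA subnDA addKn.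
by rewrite [in RHS]mulnC (bin_trinomial (leq_addr c j) jci) addKn mulnC.
Qed.

End DerivativeBlocks.

Lemma blkmx_lower_diag (R : realType) m k (M : nat -> nat -> 'M[R]_m) D :
  (forall i j, (i < j)%N -> M i j = 0) -> (forall i, M i i = D) ->
  blk_lower_diag (blkmx k M) D.
Proof. by move=> M0 MD p q; rewrite mxE; split=> [/M0 ->|->]; rewrite ?mxE ?MD. Qed.

Lemma blk_lower_diag_unitmx (R : realType) m k (M : 'M[R]_(k.+1 * m)) D :
  D \in unitmx -> blk_lower_diag M D -> M \in unitmx.
Proof.
move=> uD lowM; rewrite -row_free_unit -kermx_eq0 -submx0.
apply/rV_subP => u /sub_kermxP uM0; rewrite submx0; apply/eqP.
pose ublk (l : 'I_k.+1) := \row_b u 0 (bindex l b).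
suff ublk0 d (l : 'I_k.+1) : (k - l < d)%N -> ublk l = 0.
  apply/rowP => p; rewrite mxE -(bindexK p).
  have := ublk0 k.+1 (Ordinal (blk_lt p)).
  by move=> /(_ _)/rowP/(_ (bidx p)); rewrite !mxE; apply; have := blk_lt p; lia.
(* Descending induction on l: block l of u *m M only involves the blocks l' >= l of u,
   and the block of M on the diagonal is D. *)
elim: d l => [//|d IH] l ltd.
have ublkD : ublk l *m D = 0.
  apply/rowP => b; rewrite !mxE.
  move/rowP/(_ (bindex l b)): uM0; rewrite !mxE sum_blocks.
  rewrite (bigD1 l) //= [X in _ + X]big1 ?addr0 => [blk_l_eq|l' nl'].
    rewrite -[RHS]blk_l_eq; apply: eq_bigr => a _.
    by rewrite (proj2 (lowM _ _)) ?blk_bindex // !bidx_bindex mxE.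
  apply: big1 => a _; case: (ltnP l' l) => [lt_l'l|le_ll'].
    by rewrite (proj1 (lowM _ _)) ?mulr0 // !blk_bindex.
  have lt_ll' : (l < l')%N by rewrite ltn_neqAle le_ll' andbT eq_sym.
  move: (IH l') => /(_ _)/rowP/(_ a); rewrite !mxE => -> //; first by rewrite mul0r.
  by have := ltn_ord l'; lia.
by rewrite -(mulmxK uD (ublk l)) ublkD mul0mx.
Qed.

Section DerivativeArrays.
Variables (R : realType) (m k : nat) (I : set R).
Hypothesis openI : open I.
Implicit Types E F K L : R -> 'M[R]_m.

Lemma Earr_blk E F t :
  Earr E F k t = blkmx k (fun i j => deriv_blk E t i j + deriv_blk F t i j.+1).
Proof.
apply/matrixP => p q; rewrite !mxE /deriv_blk.
case: (ltngtP (blk q) (blk p)) => [_|_|->]; rewrite ?mxE //.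
- by rewrite !mulmxnE !mxE !mulr_natl !subnS subn0.
- by rewrite addr0.
- by rewrite (bin_small (ltnSn _)) mul0r !addr0 mulmxnE binn mulr1n mul1r mxE.
Qed.

Lemma Farr_blk F t : Farr F k t = blkcol k (fun i => deriv_blk F t i 0).
Proof.
by apply/matrixP => p q; rewrite !mxE /deriv_blk leq0n subn0 bin0 mulr1n mxE.
Qed.

Lemma Harr_blk K t : Harr K k t = blkcol k (fun i => deriv_blk (mder 1 K) t i 0).
Proof.
apply/matrixP => p q.
by rewrite !mxE /deriv_blk leq0n subn0 bin0 mulr1n mder_derive1 mxE.
Qed.

Lemma EarrMl L E F t : smooth_on I L -> smooth_on I E -> smooth_on I F -> I t ->
  Earr (fun s => L s *m E s) (fun s => L s *m F s) k t
  = blkmx k (deriv_blk L t) *m Earr E F k t.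
Proof.
move=> sL sE sF It; rewrite !Earr_blk mul_blkmx; apply: eq_blkmx => i j ltik _.
rewrite (deriv_blkM openI _ sL sE It ltik) (deriv_blkM openI _ sL sF It ltik).
by rewrite -big_split; apply: eq_bigr => l _; rewrite mulmxDr.
Qed.

Lemma FarrMl L F t : smooth_on I L -> smooth_on I F -> I t ->
  Farr (fun s => L s *m F s) k t = blkmx k (deriv_blk L t) *m Farr F k t.
Proof.
move=> sL sF It; rewrite !Farr_blk mul_blkmx_col; apply: eq_blkcol => i ltik.
exact: (deriv_blkM openI _ sL sF It ltik).
Qed.

Lemma EarrMr E F K t : smooth_on I E -> smooth_on I F -> smooth_on I K -> I t ->
  Earr (fun s => E s *m K s) (fun s => F s *m K s + E s *m mder 1 K s) k t
  = Earr E F k t *m blkmx k (fun i j => deriv_blk K t i.+1 j.+1).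
Proof.
move=> sE sF sK It; have sK' := smooth_on_derive1 sK.
rewrite !Earr_blk mul_blkmx; apply: eq_blkmx => i j ltik _.
rewrite (deriv_blkD openI _ _ (smooth_onM openI sF sK) (smooth_onM openI sE sK') It).
rewrite (deriv_blkM openI _ sE sK It ltik) (deriv_blkM openI _ sE sK' It ltik).
rewrite (deriv_blkM openI (N := k.+2) _ sF sK It (ltnW ltik)).
rewrite [\sum_(l < k.+2) _]big_ord_recl /= (deriv_blk_gt K t (ltn0Sn j)) mulmx0 add0r.
under [in RHS]eq_bigr => l _ do rewrite mulmxDl {1}deriv_blkSS mulmxDr.
by rewrite !big_split /= -addrA [X in _ + X]addrC.
Qed.

Lemma FarrMr E F K t : smooth_on I E -> smooth_on I F -> smooth_on I K -> I t ->
  Farr (fun s => F s *m K s + E s *m mder 1 K s) k t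
  = Farr F k t *m K t + Earr E F k t *m Harr K k t.
Proof.
move=> sE sF sK It; have sK' := smooth_on_derive1 sK.
rewrite !Farr_blk Harr_blk Earr_blk mul_blkcol_mx mul_blkmx_col add_blkcol.
apply: eq_blkcol => i ltik.
rewrite (deriv_blkD openI _ _ (smooth_onM openI sF sK) (smooth_onM openI sE sK') It).
rewrite (deriv_blkM openI (N := k.+2) _ sF sK It (ltnW ltik)) big_ord_recl /=.
rewrite (deriv_blkM openI _ sE sK' It ltik) deriv_blk_diag.
under [in RHS]eq_bigr => l _ do rewrite mulmxDl.
rewrite big_split /= -!addrA; congr (_ + _); rewrite addrC; congr (_ + _).
by apply: eq_bigr => l _; rewrite deriv_blk0S.
Qed.

End DerivativeArrays.

Section SolutionSets.
Variables (R : realType) (m : nat).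

Lemma Sset_transform n (Ea Et Lk Kk : 'M[R]_n) (Fa Ft H : 'M[R]_(n, m)) (K : 'M[R]_m) :
  Lk \in unitmx -> Kk \in unitmx -> K \in unitmx ->
  Et = Lk *m Ea *m Kk -> Ft = Lk *m Fa *m K + Lk *m Ea *m H ->
  [set z | exists y, Et *m y = Ft *m z] = invimg K [set z | exists y, Ea *m y = Fa *m z].
Proof.
move=> uLk uKk uK -> ->; apply/seteqP; split=> [z [y eqy]|_ [w [y eqy] <-]].
  exists (K *m z); last by rewrite mulKmx.
  exists (Kk *m y - H *m z); apply: (can_inj (mulKmx uLk)).
  by rewrite !mulmxBr !mulmxA eqy mulmxDl addrK.
exists (invmx Kk *m (y + H *m (invmx K *m w))).
by rewrite -mulmxA mulKVmx // mulmxDr mulmxDl -!mulmxA eqy mulKVmx.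
Qed.

Lemma invimg_ker S (L E K : 'M[R]_m) : L \in unitmx -> K \in unitmx ->
  invimg K S `&` kerset (L *m E *m K) = invimg K (S `&` kerset E).
Proof.
move=> uL uK; apply/seteqP; split=> [_ [[w Sw <-]]|_ [w [Sw Ew0] <-]].
  rewrite /kerset /= -!mulmxA mulKVmx // => LEw0; exists w => //; split=> //=.
  by apply: (can_inj (mulKmx uL)); rewrite LEw0 mulmx0.
split; first by exists w.
by rewrite /kerset /= -!mulmxA mulKVmx // Ew0 mulmx0.
Qed.

Lemma invimgK (M : 'M[R]_m) S : M \in unitmx -> invimg (invmx M) (invimg M S) = S.
Proof.
move=> uM; apply/seteqP; split=> [_ [_ [w Sw <-] <-]|w Sw].
  by rewrite invmxK mulKVmx.
by exists (invmx M *m w); [exists w | rewrite invmxK mulKVmx].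
Qed.

Lemma is_dim_invimg (M : 'M[R]_m) S d : M \in unitmx -> is_dim S d -> is_dim (invimg M S) d.
Proof.
move=> uM [B [rkB SB]]; exists (invmx M *m B); split.
  by rewrite eqmxMfull ?row_full_unit ?unitmx_inv.
move=> z; split=> [[w /SB[c ->] <-]|[c ->]]; first by exists c; rewrite mulmxA.
by exists (B *m c); [apply/SB; exists c | rewrite mulmxA].
Qed.

Lemma is_dim_invimgE (M : 'M[R]_m) S d : M \in unitmx ->
  is_dim (invimg M S) d <-> is_dim S d.
Proof.
move=> uM; split; last exact: is_dim_invimg.
by rewrite -{2}(invimgK S uM); apply: is_dim_invimg; rewrite unitmx_inv.
Qed.

End SolutionSets.

Lemma mxrank_unit_mul (R : fieldType) n (A B C : 'M[R]_n) :
  A \in unitmx -> C \in unitmx -> \rank (A *m B *m C) = \rank B.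
Proof. by move=> uA uC; rewrite mxrankMfree ?row_free_unit // eqmxMfull ?row_full_unit. Qed.

Unset Implicit Arguments. Set Strict Implicit.

Theorem propositionp (R : realType) (m : nat) (I : set R) (L K : R -> 'M[R]_m) :
  open I ->
  smooth_on I L -> smooth_on I K ->
  (forall t, I t -> L t \in unitmx) ->
  (forall t, I t -> K t \in unitmx) ->
  forall k : nat,
  exists Lk Kk : R -> 'M[R]_(k.+1 * m),
    (forall t, I t ->
       [/\ Lk t \in unitmx, Kk t \in unitmx,
           blk_lower_diag (Lk t) (L t) & blk_lower_diag (Kk t) (K t)]) /\
    forall E F : R -> 'M[R]_m,
      smooth_on I E -> smooth_on I F ->
      let Et := fun t => L t *m E t *m K t in
      let Ft := fun t => L t *m F t *m K t + L t *m E t *m mder 1 K t in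
      forall t, I t ->
        [/\ Earr Et Ft k t = Lk t *m Earr E F k t *m Kk t,
            Farr Ft k t = Lk t *m Farr F k t *m K t
                          + Lk t *m Earr E F k t *m Harr K k t,
            Sset Et Ft k t = invimg (K t) (Sset E F k t),
            Sset Et Ft k t `&` kerset (Et t)
              = invimg (K t) (Sset E F k t `&` kerset (E t))
          & [/\ \rank (Earr Et Ft k t) = \rank (Earr E F k t),
                (forall d, is_dim (Sset Et Ft k t) d <-> is_dim (Sset E F k t) d)
              & (forall d, is_dim (Sset Et Ft k t `&` kerset (Et t)) d
                           <-> is_dim (Sset E F k t `&` kerset (E t)) d)]].
Proof.
move=> openI sL sK uL uK k.
pose Lk t := blkmx k (deriv_blk L t).
pose Kk t := blkmx k (fun i j => deriv_blk K t i.+1 j.+1).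
have lowL t : blk_lower_diag (Lk t) (L t).
  by apply: blkmx_lower_diag => [i j|i]; [exact: deriv_blk_gt | exact: deriv_blk_diag].
have lowK t : blk_lower_diag (Kk t) (K t).
  apply: blkmx_lower_diag => [i j ij|i]; last exact: deriv_blk_diag.
  by apply: deriv_blk_gt; rewrite ltnS.
have uLk t : I t -> Lk t \in unitmx by move/uL/blk_lower_diag_unitmx; apply.
have uKk t : I t -> Kk t \in unitmx by move/uK/blk_lower_diag_unitmx; apply.
exists Lk, Kk; split=> [t It|E F sE sF Et Ft t It]; first by split; auto.
have sEK := smooth_onM openI sE sK.
have sFK := smooth_onD openI (smooth_onM openI sF sK)
                              (smooth_onM openI sE (smooth_on_derive1 sK)).
have EtE : Et = fun s => L s *m (E s *m K s) by apply/funext => s; rewrite mulmxA.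
have FtE : Ft = fun s => L s *m (F s *m K s + E s *m mder 1 K s).
  by apply/funext => s; rewrite mulmxDr !mulmxA.
have eqE : Earr Et Ft k t = Lk t *m Earr E F k t *m Kk t.
  by rewrite EtE FtE (EarrMl k openI sL sEK sFK It) (EarrMr k openI sE sF sK It) mulmxA.
have eqF : Farr Ft k t = Lk t *m Farr F k t *m K t + Lk t *m Earr E F k t *m Harr K k t.
  by rewrite FtE (FarrMl k openI sL sFK It) (FarrMr k openI sE sF sK It) mulmxDr !mulmxA.
have eqS : Sset Et Ft k t = invimg (K t) (Sset E F k t).
  exact: Sset_transform (uLk t It) (uKk t It) (uK t It) eqE eqF.
have eqSK : Sset Et Ft k t `&` kerset (Et t) = invimg (K t) (Sset E F k t `&` kerset (E t)).
  by rewrite eqS invimg_ker ?uL ?uK.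
split=> //; split=> [|d|d].
- by rewrite eqE mxrank_unit_mul ?uLk ?uKk.
- by rewrite eqS is_dim_invimgE ?uK.
- by rewrite eqSK is_dim_invimgE ?uK.
Qed.
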